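(* Let $s,k$ be integers with $1\leq k<s$. The Laplacian spectrum of the spider $T(s,k)$ is $$\{0^{[1]},\ \theta^{[k-1]},\ \lambda_1^{[1]},\ 1^{[s-k-1]},\ \lambda_2^{[1]},\ \overline{\theta}^{[k-1]},\ \lambda_3^{[1]}\},$$ where $\theta=\frac{3-\sqrt{5}}{2}$, $\overline{\theta}=\frac{3+\sqrt{5}}{2}$, and $\lambda_1,\lambda_2,\lambda_3$ are the roots of $x^3-(s+4)x^2+(3s+4)x-(s+k+1)$.
   Context: For a graph $G$, the Laplacian matrix is $L(G)=D(G)-A(G)$, with $D(G)$ the diagonal degree matrix and $A(G)$ the adjacency matrix; its Laplacian spectrum is the multiset of eigenvalues of $L(G)$, and $a^{[m]}$ denotes the eigenvalue $a$ with multiplicity $m$ (listed values may coincide, in which case multiplicities add). For integers $1\leq k\leq s$, the spider $T(s,k)$ is the tree obtained from the star $K_{1,s}$ by extending $k$ of its $s$ rays by one extra edge each; it has $s+k+1$ vertices. *)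

From HB Require Import structures.
From mathcomp Require Import all_boot all_order all_algebra.
Set Implicit Arguments. Unset Strict Implicit. Unset Printing Implicit Defensive.
Import Order.TTheory GRing.Theory Num.Theory.
Local Open Scope ring_scope.

(* A simple graph on a finite vertex type is a symmetric irreflexive relation. *)
Definition degree (T : finType) (adj : rel T) (v : T) : nat := #|[set w | adj v w]|.

Definition laplacian (R : pzRingType) (n : nat) (adj : rel 'I_n) : 'M[R]_n :=
  \matrix_(i, j) ((if i == j then (degree adj i)%:R else 0) - (adj i j)%:R).

Definition has_spectrum (R : comNzRingType) (n : nat) (A : 'M[R]_n) (sp : seq R) : Prop :=
  char_poly A = \prod_(a <- sp) ('X - a%:P).

(* Spider T(s,k): vertices 0..s+k; 0 is the centre, 1..s are the ray
   vertices adjacent to the centre, and for 1 <= i <= k the vertex s+i is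
   the extra vertex attached to i. *)
Definition spider_edge (s k : nat) (a b : nat) : bool :=
  ((a == 0%N) && (0 < b <= s)%N) || ((0 < a <= k)%N && (b == a + s)%N).

Definition spider_adj (s k : nat) : rel 'I_(s + k + 1) :=
  fun i j => spider_edge s k i j || spider_edge s k j i.
Arguments spider_adj : clear implicits.
Arguments laplacian R {n} adj.

From HB Require Import structures.
From mathcomp Require Import all_boot all_order all_algebra.
From mathcomp Require Import zify ring lra polyrcf.
Set Implicit Arguments.
Unset Strict Implicit.
Unset Printing Implicit Defensive.
Import Order.TTheory GRing.Theory Num.Theory.
Local Open Scope ring_scope.

(* Eliminating the vertices of T(s,k) from the leaves inwards makes x - L
   triangular: a pendant vertex has pivot x - 1, an arm vertex that has absorbed
   its pendant vertex has pivot b = x - 2 - 1/(x - 1), and the centre, having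
   absorbed all s rays, x - s - k/b - (s - k)/(x - 1).  The product of the pivots
   is x (x^2 - 3x + 1)^(k-1) (x - 1)^(s-k-1) times the cubic; holding for every
   x >= 3, this is an identity of polynomials.  The roots of x^2 - 3x + 1 are
   theta and its conjugate, and the cubic changes sign on (0,1), (1,3) and
   (3, s+4), so it splits over any real closed field. *)

Lemma horner_char_poly (R : comNzRingType) n (A : 'M[R]_n) (x : R) :
  (char_poly A).[x] = \det (x%:M - A).
Proof.
rewrite -horner_evalE -det_map_mx; congr (\det _); apply/matrixP => i j.
by rewrite !mxE /= horner_evalE !hornerE hornerMn hornerX.
Qed.

Lemma det_mulmx_unitrig (R : comNzRingType) n (A E : 'M[R]_n) :
    is_trig_mx E -> (forall i, E i i = 1) -> is_trig_mx (A *m E)^T ->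
  \det A = \prod_i (A *m E) i i.
Proof.
move=> trigE diagE trigAE.
have detE : \det E = 1 by rewrite det_trig // big1.
rewrite -[\det A]mulr1 -[in LHS]detE -det_mulmx -det_tr det_trig //.
by apply: eq_bigr => i _; rewrite mxE.
Qed.

Lemma poly_eq_on_ray (R : numDomainType) (c : R) (p q : {poly R}) :
  (forall x, c <= x -> p.[x] = q.[x]) -> p = q.
Proof.
move=> epq; apply/eqP; rewrite -subr_eq0; apply/negPn/negP => npq.
set rs := [seq c + i%:R | i <- iota 0 (size (p - q)%R)].
suff : (size rs < size (p - q)%R)%N by rewrite size_map size_iota ltnn.
apply: max_poly_roots npq _ _.
  apply/allP => _ /mapP[i _ ->].
  by rewrite /root hornerD hornerN epq ?subrr // lerDl ler0n.
by rewrite map_inj_uniq ?iota_uniq // => i j /addrI /eqP; rewrite eqr_nat => /eqP.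
Qed.

Lemma sum_indicator_seq (R : pzSemiRingType) n (r : seq nat) (G : nat -> R) :
    uniq r -> all (gtn n) r ->
  \sum_(l < n) ((l : nat) \in r)%:R * G l = \sum_(l <- r) G l.
Proof.
move=> uniq_r /allP r_lt_n.
rewrite -(big_mkord xpredT (fun l => (l \in r)%:R * G l)).
transitivity (\sum_(0 <= l < n | l \in r) G l).
  by rewrite [RHS]big_mkcond; apply: eq_bigr => l _; case: (l \in r); rewrite ?mul1r ?mul0r.
rewrite -big_filter; apply: perm_big; apply: uniq_perm => //.
  exact/filter_uniq/iota_uniq.
move=> l; rewrite mem_filter mem_iota add0n /=.
by case r_l: (l \in r) => //=; rewrite subn0; apply: r_lt_n.
Qed.

Definition spider_cubic (R : nzRingType) (s k : nat) : {poly R} :=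
  'X^3 - (s + 4)%:R *: 'X^2 + (3 * s + 4)%:R *: 'X - ((s + k + 1)%:R)%:P.

Lemma spider_cubic_monic_size (R : nzRingType) s k :
  spider_cubic R s k \is monic /\ size (spider_cubic R s k) = 4%N.
Proof.
rewrite /spider_cubic -!addrA; set r := (X in 'X^3 + X).
have size_r : (size r < size ('X^3 : {poly R}))%N.
  rewrite size_polyXn ltnS; apply/leq_sizeP => j j_ge3.
  rewrite !(coefD, coefN, coefZ, coefXn, coefX, coefC) !gtn_eqF ?(leq_trans _ j_ge3) //.
  by rewrite !mulr0 subrr oppr0 addr0.
rewrite monicE lead_coefDl // size_polyDl // lead_coefXn size_polyXn.
by split.
Qed.

Lemma horner_spider_cubic (R : comNzRingType) s k (y : R) :
  (spider_cubic R s k).[y] =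
  y ^+ 3 - (s + 4)%:R * y ^+ 2 + (3 * s + 4)%:R * y - (s + k + 1)%:R.
Proof. by rewrite /spider_cubic !(hornerD, hornerN, hornerZ, hornerXn, hornerX, hornerC). Qed.

Section SpiderLaplacian.
Variable R : fieldType.
Variables s k : nat.
Hypothesis k_lt_s : (k < s)%N.

Local Notation n := (s + k + 1)%N.
Local Notation L := (laplacian R (spider_adj s k)).

Definition spider_nbrs (p : nat) : seq nat :=
  if p == 0%N then index_iota 1 s.+1
  else if (p <= k)%N then [:: 0%N; p + s]%N
  else if (p <= s)%N then [:: 0%N] else [:: p - s]%N.

Lemma spider_adjE (i j : 'I_n) : spider_adj s k i j = ((j : nat) \in spider_nbrs i).
Proof.
move: (ltn_ord i) (ltn_ord j); rewrite /spider_adj /spider_edge /spider_nbrs.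
case: ifP => [/eqP->|i_neq0]; first by rewrite mem_index_iota; lia.
by case: ifP => i_le_k; [|case: ifP => i_le_s]; rewrite !inE; lia.
Qed.

Lemma sum_spider_adj (T : pzSemiRingType) (G : nat -> T) (i : 'I_n) :
  \sum_(l < n) (spider_adj s k i l)%:R * G l = \sum_(l <- spider_nbrs i) G l.
Proof.
under eq_bigr => l _ do rewrite spider_adjE.
have i_lt_n := ltn_ord i; apply: sum_indicator_seq; rewrite /spider_nbrs.
- case: ifP => [_|i_neq0]; first exact: iota_uniq.
  by case: ifP => i_le_k; [|case: ifP]; rewrite //= inE; lia.
- apply/allP => l /=; case: ifP => [_|i_neq0]; first by rewrite mem_index_iota; lia.
  by case: ifP => i_le_k; [|case: ifP => i_le_s]; rewrite !inE; lia.
Qed.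

Lemma spider_degree (i : 'I_n) : degree (spider_adj s k) i = size (spider_nbrs i).
Proof.
rewrite /degree -sum1_card -sum1_size -(@sum_spider_adj nat (fun=> 1%N)) big_mkcond /=.
by apply: eq_bigr => l _; rewrite inE; case: spider_adj.
Qed.

Lemma mul_spider_charmx (x : R) (F : nat -> nat -> R) (i j : 'I_n) :
  ((x%:M - L) *m \matrix_(p, q) F p q) i j =
  (x - (size (spider_nbrs i))%:R) * F i j + \sum_(l <- spider_nbrs i) F l j.
Proof.
have no_loop : spider_adj s k i i = false by rewrite /spider_adj /spider_edge; lia.
set d := (size (spider_nbrs i))%:R.
rewrite mxE; transitivity (\sum_l ((i == l)%:R * ((x - d) * F l j)
                                 + (spider_adj s k i l)%:R * F l j)).
  apply: eq_bigr => l _; rewrite !mxE spider_degree.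
  by case: eqP => [<-|_]; rewrite ?no_loop /=; ring.
rewrite big_split (@sum_spider_adj R (fun l => F l j)) /=.
rewrite (bigD1 i) //= eqxx mul1r big1 ?addr0 // => l.
by rewrite eq_sym => /negbTE->; rewrite mul0r.
Qed.

Section Elimination.
Variable x : R.

Definition arm_pivot : R := x - 2 - (x - 1)^-1.
Definition centre_pivot : R :=
  x - s%:R - k%:R / arm_pivot - (s - k)%:R / (x - 1).

Definition spider_pivot (p : nat) : R :=
  if p == 0%N then centre_pivot else if (p <= k)%N then arm_pivot else x - 1.

(* The columns make (x - L) E upper triangular: column 0 solves
   (x - L) v = centre_pivot e_0 with v_0 = 1, and column q <= k is
   e_q - e_(q+s) / (x - 1). *)
Definition spider_elim (p q : nat) : R :=
  if q == 0%N then
    if p == 0%N then 1 else if (p <= k)%N then - arm_pivot^-1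
    else if (p <= s)%N then - (x - 1)^-1 else ((x - 1) * arm_pivot)^-1
  else if p == q then 1
  else if (q <= k)%N && (p == q + s)%N then - (x - 1)^-1 else 0.

Hypotheses (x1_neq0 : x - 1 != 0) (quad_neq0 : (x - 2) * (x - 1) - 1 != 0).

Local Notation E := (\matrix_(p, q) spider_elim p q : 'M[R]_n).

Lemma arm_pivot_mul : (x - 1) * arm_pivot = (x - 2) * (x - 1) - 1.
Proof. by rewrite /arm_pivot; field. Qed.

Lemma centre_pivot_mul :
  centre_pivot * arm_pivot * (x - 1) ^+ 2 = x * (spider_cubic R s k).[x].
Proof.
rewrite /centre_pivot /arm_pivot horner_spider_cubic natrB 1?ltnW // !natrD.
by field; rewrite ?x1_neq0 ?quad_neq0.
Qed.

Lemma spider_elim_trig : is_trig_mx E.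
Proof.
apply/is_trig_mxP => i j i_lt_j; rewrite mxE /spider_elim.
have [-> -> ->] : [/\ (j == 0 :> nat) = false, (i == j :> nat) = false
                  & (i == j + s :> nat)%N = false] by split; lia.
by rewrite andbF.
Qed.

Lemma spider_elim_diag (i : 'I_n) : E i i = 1.
Proof. by rewrite mxE /spider_elim eqxx; case: eqP. Qed.

Lemma charmx_spider_elim_trig : is_trig_mx ((x%:M - L) *m E)^T.
Proof.
apply/is_trig_mxP => j i j_lt_i; rewrite mxE mul_spider_charmx /spider_nbrs /spider_elim.
have i_lt_n := ltn_ord i; have -> : (i == 0 :> nat) = false by lia.
repeat (rewrite ?big_cons ?big_nil /=; case: ifP => ?); try (exfalso; lia).
all: by rewrite /arm_pivot; field; rewrite ?x1_neq0 ?quad_neq0.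
Qed.

Lemma charmx_spider_elim_diag (i : 'I_n) :
  ((x%:M - L) *m E) i i = spider_pivot i.
Proof.
have i_lt_n := ltn_ord i.
rewrite mul_spider_charmx /spider_pivot /spider_nbrs /spider_elim.
case: (posnP i) => [_|i_gt0] /=.
  rewrite size_iota (big_cat_nat _ (n := k.+1)) //; last by lia.
  rewrite (eq_big_nat _ _ (F2 := fun=> - arm_pivot^-1)); last first.
    by move=> l l_arm; have [-> ->] : (l == 0)%N = false /\ (l <= k)%N by split; lia.
  rewrite [X in _ + _ _ X](eq_big_nat _ _ (F2 := fun=> - (x - 1)^-1)); last first.
    move=> l l_ray.
    by have [-> -> ->] : [/\ (l == 0)%N = false, (l <= k)%N = false & (l <= s)%N] by split; lia.
  by rewrite !sumr_const_nat !subSS !subn0 /centre_pivot !mulr_natl /=; ring.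
rewrite eqxx.
repeat (rewrite ?big_cons ?big_nil /=; case: ifP => ?); try (exfalso; lia).
all: by rewrite /arm_pivot; field; rewrite ?x1_neq0 ?quad_neq0.
Qed.

Lemma det_spider_charmx :
  \det (x%:M - L) = centre_pivot * arm_pivot ^+ k * (x - 1) ^+ s.
Proof.
rewrite (det_mulmx_unitrig spider_elim_trig spider_elim_diag charmx_spider_elim_trig).
under eq_bigr do rewrite charmx_spider_elim_diag.
rewrite -(big_mkord xpredT spider_pivot) big_ltn ?addn1 //.
rewrite (big_cat_nat _ (n := k.+1)) //; last by lia.
rewrite (eq_big_nat _ _ (F2 := fun=> arm_pivot)); last first.
  move=> l l_arm; rewrite /spider_pivot.
  by have [-> ->] : (l == 0)%N = false /\ (l <= k)%N by split; lia.
rewrite [X in _ * _ _ X](eq_big_nat _ _ (F2 := fun=> x - 1)); last first.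
  move=> l l_pend; rewrite /spider_pivot.
  by have [-> ->] : (l == 0)%N = false /\ (l <= k)%N = false by split; lia.
rewrite !prodr_const_nat subSS subn0 (_ : (s + k).+1 - k.+1 = s)%N; last by lia.
by rewrite /= mulrA.
Qed.

End Elimination.

End SpiderLaplacian.

Lemma char_poly_spider_laplacian (R : realFieldType) s k : (0 < k)%N -> (k < s)%N ->
  char_poly (laplacian R (spider_adj s k)) =
  'X * ('X^2 - 3 *: 'X + 1) ^+ (k - 1) * ('X - 1) ^+ (s - k - 1) * spider_cubic R s k.
Proof.
move=> k_gt0 k_lt_s; apply: (@poly_eq_on_ray _ 3) => x x_ge3.
have x1_neq0 : x - 1 != 0 by rewrite lt0r_neq0 //; lra.
have quad_neq0 : (x - 2) * (x - 1) - 1 != 0 by rewrite lt0r_neq0 //; nra.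
have horner_quad : ('X^2 - 3 *: 'X + 1 : {poly R}).[x] = (x - 1) * arm_pivot x.
  by rewrite arm_pivot_mul // !hornerE; ring.
have horner_X1 : ('X - 1 : {poly R}).[x] = x - 1 by rewrite !hornerE.
have split_s : (x - 1) ^+ s = (x - 1) ^+ 2 * (x - 1) ^+ (k - 1) * (x - 1) ^+ (s - k - 1).
  by rewrite -!exprD; congr (_ ^+ _); lia.
have split_k : arm_pivot x ^+ k = arm_pivot x * arm_pivot x ^+ (k - 1).
  by rewrite -exprS subn1 prednK.
rewrite horner_char_poly det_spider_charmx // split_s split_k.
rewrite !(hornerM, horner_exp) hornerX horner_quad horner_X1.
set f := (spider_cubic R s k).[x].
rewrite [RHS](_ : _ = x * f * ((x - 1) * arm_pivot x) ^+ (k - 1) * (x - 1) ^+ (s - k - 1)).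
  by rewrite -centre_pivot_mul // exprMn; ring.
by ring.
Qed.

Lemma spider_cubic_factor (R : rcfType) s k : (0 < k)%N -> (k < s)%N ->
  exists l1 l2 l3 : R,
    spider_cubic R s k = ('X - l1%:P) * ('X - l2%:P) * ('X - l3%:P).
Proof.
move=> k_gt0 k_lt_s; have [monic_f size_f] := spider_cubic_monic_size R s k.
set f := spider_cubic R s k in monic_f size_f *.
have k_ge1 : 1 <= k%:R :> R by rewrite ler1n.
have s_ge : k%:R + 1 <= s%:R :> R by rewrite natr1 ler_nat.
have f0 : f.[0] < 0 by rewrite horner_spider_cubic; lra.
have f1 : 0 < f.[1] by rewrite horner_spider_cubic; lra.
have f3 : f.[3] < 0 by rewrite horner_spider_cubic; nra.
have f_big : 0 < f.[s%:R + 4] by rewrite horner_spider_cubic; nra.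
have le13 : 1 <= 3 :> R by lra.
have le3s : 3 <= s%:R + 4 :> R by lra.
have /(poly_ivtoo ler01) [l1 /[!in_itv]/=/andP[l1_gt l1_lt] root1] : f.[0] * f.[1] < 0 by nra.
have /(poly_ivtoo le13) [l2 /[!in_itv]/=/andP[l2_gt l2_lt] root2] : f.[1] * f.[3] < 0 by nra.
have /(poly_ivtoo le3s) [l3 /[!in_itv]/=/andP[l3_gt l3_lt] root3] : f.[3] * f.[s%:R + 4] < 0 by nra.
exists l1, l2, l3.
have uniq_l : uniq [:: l1; l2; l3].
  by rewrite /= !inE !negb_or !lt_eqF //; lra.
rewrite [LHS](all_roots_prod_XsubC (rs := [:: l1; l2; l3])) ?uniq_rootsE //=; last first.
  by rewrite root1 root2 root3.
by rewrite (monicP monic_f) scale1r !big_cons big_nil mulr1 mulrA.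
Qed.

Lemma golden_quadratic_factor (R : rcfType) :
  ('X - ((3 - Num.sqrt 5) / 2)%:P) * ('X - ((3 + Num.sqrt 5) / 2)%:P)
  = 'X^2 - 3 *: 'X + 1 :> {poly R}.
Proof.
set t := (3 - Num.sqrt 5) / 2; set t' := (3 + Num.sqrt 5) / 2.
have sqrt5 : Num.sqrt 5 ^+ 2 = 5 :> R by rewrite sqr_sqrtr // ler0n.
have sum_t : t + t' = 3 by rewrite /t /t'; field.
have prod_t : t * t' = 1.
  rewrite (_ : t * t' = (9 - Num.sqrt 5 ^+ 2) / 4); last by rewrite /t /t'; field.
  by rewrite sqrt5; field.
clearbody t t'.
transitivity ('X^2 - (t + t')%:P * 'X + (t * t')%:P); first by rewrite polyCD polyCM; ring.
by rewrite sum_t prod_t mul_polyC.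
Qed.

Theorem proposition3p2 (R : rcfType) (s k : nat) (hk1 : (1 <= k)%N) (hks : (k < s)%N) :
  let theta : R := (3 - Num.sqrt 5) / 2 in
  let thetab : R := (3 + Num.sqrt 5) / 2 in
  exists l1 l2 l3 : R,
    'X^3 - (s + 4)%:R *: 'X^2 + (3 * s + 4)%:R *: 'X - ((s + k + 1)%:R)%:P
      = ('X - l1%:P) * ('X - l2%:P) * ('X - l3%:P)
    /\ has_spectrum (laplacian R (spider_adj s k))
         (nseq 1 0 ++ nseq (k - 1) theta ++ nseq 1 l1 ++ nseq (s - k - 1) 1
          ++ nseq 1 l2 ++ nseq (k - 1) thetab ++ nseq 1 l3).
Proof.
move=> theta thetab.
have [l1 [l2 [l3 cubic_eq]]] := spider_cubic_factor R hk1 hks.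
exists l1, l2, l3; split; first exact: cubic_eq.
rewrite /has_spectrum char_poly_spider_laplacian // -golden_quadratic_factor cubic_eq.
rewrite !big_cat /= !big_nseq !iter_mulr_1 !big_seq1 polyC0 polyC1 subr0 exprMn /theta /thetab.
ring.
Qed.
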